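(* Let $k\in\mathbb{N}$ and $0\le i<k$. Define $\mathrm{bit}_i:\mathbb{Z}_{2^k}\to\{-1,1\}$ by $\mathrm{bit}_i(x)=(-1)^{x_i}$, where $x=\sum_{j=0}^{k-1}x_j2^j$ with $x_j\in\{0,1\}$. Let $\alpha\in\mathbb{Z}_{2^k}$. Then $\widehat{\mathrm{bit}_i}(\alpha)=0$ unless $\alpha$ is an odd multiple of $2^{k-i-1}$, in which case $|\widehat{\mathrm{bit}_i}(\alpha)|=O(2^{k-i}/|\alpha|_{2^k})$, i.e. $|\widehat{\mathrm{bit}_i}(\alpha)|\le c\,2^{k-i}/|\alpha|_{2^k}$ for an absolute constant $c$ independent of $k,i,\alpha$.
   Context: $\mathbb{Z}_N=\{0,\dots,N-1\}$ with addition mod $N$. For $f:\mathbb{Z}_N\to\mathbb{C}$, $\widehat f(\alpha)=\frac1N\sum_{x\in\mathbb{Z}_N}f(x)\exp(-2\pi i\alpha x/N)$. For $N\in\mathbb{N}$ and $x\in\mathbb{R}$, $|x|_N=\min\{|x-Nz|:z\in\mathbb{Z}\}$. *)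

From HB Require Import structures.
From mathcomp Require Import all_boot all_order all_algebra.
From mathcomp Require Import all_classical all_reals all_analysis.
From mathcomp Require Import complex.
Set Implicit Arguments. Unset Strict Implicit. Unset Printing Implicit Defensive.
Import Order.TTheory GRing.Theory Num.Theory.
Local Open Scope ring_scope.

Definition expi (R : realType) (t : R) : R[i] := (cos t +i* sin t)%C.

Definition fourier (R : realType) (N : nat) (f : 'I_N -> R[i]) (a : 'I_N) : R[i] :=
  (N%:R)^-1 * \sum_(x < N) f x * expi (- (2 * pi * (a : nat)%:R * (x : nat)%:R / N%:R)).

Definition bit (R : realType) (k i : nat) (x : 'I_(2 ^ k)) : R[i] :=
  (- 1) ^+ (odd ((x : nat) %/ 2 ^ i)).

Definition distN (R : realType) (N : nat) (x : R) : R :=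
  inf [set `|x - N%:R * z%:~R| | z in [set: int]]%classic.

Definition odd_multiple (a d : nat) : Prop := exists m : nat, odd m /\ a = (m * d)%N.

From HB Require Import structures.
From mathcomp Require Import all_boot all_order all_algebra.
From mathcomp Require Import all_classical all_reals all_analysis.
From mathcomp Require Import complex.
From mathcomp Require Import ring lra zify.
Import Order.TTheory GRing.Theory Num.Theory.
Set Implicit Arguments. Unset Strict Implicit. Unset Printing Implicit Defensive.
Local Open Scope ring_scope.

(* Let S(a) = sum_(x < 2^k) bit_i(x) e(-2 pi i a x / 2^k), so that the Fourier
   coefficient is S(a) / 2^k.  Translating x by 2^i flips bit_i, hence
   S(a) = - e(-2 pi i a 2^i / 2^k) S(a): unless S(a) = 0 this root of unity is -1,
   which forces a to be an odd multiple of 2^(k-i-1).  Translating x by 1 instead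
   (summation by parts) gives
   |1 - e(-2 pi i a / 2^k)| |S(a)| <= sum_x |bit_i(x+1) - bit_i(x)| = 2^(k-i+1),
   as bit_i changes sign 2^(k-i) times around the cycle.  Finally
   |1 - e(-2 pi i a / N)| = 2 |sin(pi a / N)| >= 2 |a|_N / N, so c = 1 works. *)


Section Expi.
Variable R : realType.
Local Open Scope complex_scope.
Implicit Types s t : R.

Lemma expiD s t : expi (s + t) = expi s * expi t.
Proof.
rewrite /expi cosD sinD; apply/eqP; rewrite eq_complex /=.
by apply/andP; split; apply/eqP; ring.
Qed.

Lemma expi0 : expi (0 : R) = 1.
Proof. by rewrite /expi cos0 sin0. Qed.

Lemma expi_2pi_nat (n : nat) : expi (2 * pi * n%:R : R) = 1.
Proof.
elim: n => [|n IHn]; first by rewrite mulr0 expi0.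
rewrite -[n.+1%:R]natr1 mulrDr mulr1 expiD IHn mul1r.
by rewrite /expi mulr_natl cos2pi sin2pi.
Qed.

Lemma norm_expi t : `|expi t| = 1.
Proof. by rewrite normc_def /= cos2Dsin2 sqrtr1. Qed.

Lemma norm_1_sub_expi t : `|1 - expi t| = (2 * `|sin (t / 2)|)%:C.
Proof.
rewrite normc_def /=; congr (_%:C).
have {1 2}-> : t = (t / 2) *+ 2 by rewrite mulr2n; field.
rewrite cos_mulr2n sin_mulr2n.
set c := cos (t / 2); set s := sin (t / 2).
have -> : (1 - (c ^+ 2 *+ 2 - 1)) ^+ 2 + (0 - c * s *+ 2) ^+ 2 = (2 * s) ^+ 2.
  transitivity ((2 * s) ^+ 2 + 4 * (1 - c ^+ 2) * (1 - (c ^+ 2 + s ^+ 2))).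
    by rewrite !mulr2n; ring.
  by rewrite cos2Dsin2 subrr mulr0 addr0.
by rewrite sqrtr_sqr normrM ger0_norm.
Qed.

End Expi.

Section SineBounds.
Variable R : realType.
Implicit Types t : R.

Lemma sin_double_le t : 0 <= t <= pi -> sin (t *+ 2) <= sin t *+ 2.
Proof.
move=> t0pi; rewrite sin_mulr2n lerMn2r /=.
by rewrite ler_piMl ?cos_le1 ?sin_ge0_pi.
Qed.

Lemma half_le_sin_pi4 : 1 / 2 <= sin (pi / 4 : R).
Proof.
have pi_gt0 := pi_gt0 R.
have := @sin_double_le (pi / 4); rewrite mulr2n.
have -> : pi / 4 + pi / 4 = pi / 2 :> R by field.
rewrite sin_pihalf mulr2n; lra.
Qed.

Lemma sin_ge_div_pi_quarter t : pi / 4 <= t <= pi / 2 -> t / pi <= sin t.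
Proof.
move=> /andP[lo hi]; have pi_gt0 := pi_gt0 R.
have sin_mono : sin (pi / 4) <= sin t.
  rewrite leNgt ltr_sin ?in_itv /= -?leNgt //; apply/andP; split; lra.
have : t / pi <= 1 / 2 by rewrite ler_pdivrMr //; lra.
have := half_le_sin_pi4; lra.
Qed.

(* Jordan-type bound, by halving [t] until it exceeds [pi / 4]. *)
Lemma sin_ge_div_pi n t : pi / 2 ^+ n.+2 <= t <= pi / 2 -> t / pi <= sin t.
Proof.
have pi_gt0 := pi_gt0 R.
elim: n t => [|n IHn] t /andP[lo hi]; have [quarter|small] := lerP (pi / 4) t.
- by apply: sin_ge_div_pi_quarter; rewrite quarter hi.
- have quarterE : pi / 2 ^+ 2 = pi / 4 :> R by rewrite expr2; field.
  by rewrite quarterE in lo; lra.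
- by apply: sin_ge_div_pi_quarter; rewrite quarter hi.
have t_ge0 : 0 <= t.
  by apply: le_trans lo; rewrite divr_ge0 ?ltW ?exprn_ge0.
have lo2 : pi / 2 ^+ n.+2 <= t *+ 2.
  have -> : pi / 2 ^+ n.+2 = (pi / 2 ^+ n.+3) *+ 2 :> R.
    by rewrite [2 ^+ n.+3]exprS mulr2n; field; rewrite expf_neq0.
  by rewrite lerMn2r.
have hi2 : t *+ 2 <= pi / 2 by rewrite mulr2n; lra.
have := IHn (t *+ 2); rewrite lo2 hi2 => /(_ isT).
have := @sin_double_le t; rewrite t_ge0 /=.
rewrite !mulr2n mulrDl; lra.
Qed.

Lemma sin_pi_frac_ge (q N : nat) : (0 < q)%N -> (q.*2 <= N)%N ->
  q%:R / N%:R <= sin (pi * q%:R / N%:R : R).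
Proof.
move=> q_gt0 qN; have pi_gt0 := pi_gt0 R.
have N_gt0 : 0 < N%:R :> R by rewrite ltr0n; lia.
have -> : q%:R / N%:R = (pi * q%:R / N%:R) / pi :> R.
  by rewrite [RHS]mulrAC [pi * _]mulrC mulfK ?gt_eqF.
apply: (@sin_ge_div_pi N); apply/andP; split.
  rewrite -mulrA ler_pM2l // ler_pdivlMr // mulrC ler_pdivrMr ?exprn_gt0 //.
  rewrite -natrX -natrM ler_nat (leq_trans _ (leq_pmull _ q_gt0)) //.
  apply: (leq_trans (ltnW (ltn_expl N (isT : (1 < 2)%N)))).
  by apply: leq_pexp2l => //; lia.
rewrite -mulrA ler_pM2l // ler_pdivrMr //.
have : (q * 2)%:R <= N%:R :> R by rewrite ler_nat muln2.
rewrite natrM; lra.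
Qed.

Lemma min_div_le_sin (r N : nat) : (0 < r)%N -> (r < N)%N ->
  (minn r (N - r))%:R / N%:R <= `|sin (pi * r%:R / N%:R : R)|.
Proof.
move=> r_gt0 rN; apply: le_trans (ler_norm _).
have [small|big] := leqP r.*2 N.
  by rewrite (minn_idPl _) ?sin_pi_frac_ge //; lia.
have -> : pi * r%:R / N%:R = pi - pi * (N - r)%:R / N%:R :> R.
  by rewrite natrB ?(ltnW rN) //; field; rewrite pnatr_eq0 -lt0n; lia.
rewrite (minn_idPr _) ?sinB ?sinpi ?cospi ?mul0r ?sub0r ?mulN1r ?opprK; try lia.
by apply: sin_pi_frac_ge; lia.
Qed.
End SineBounds.

Lemma big_ord_shift_mod (V : nmodType) (N s : nat) (F : nat -> V) : (0 < N)%N ->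
  \sum_(x < N) F x = \sum_(x < N) F ((x + s) %% N)%N.
Proof.
move=> N_gt0; pose shift (x : 'I_N) : 'I_N := Ordinal (ltn_pmod (x + s)%N N_gt0).
rewrite (reindex_inj (h := shift)) // => x y /(congr1 val) /= /eqP.
by rewrite eqn_modDr !modn_small // => /eqP /val_inj.
Qed.

Section Character.
Variables (R : realType) (N : nat).
Hypothesis N_gt0 : (0 < N)%N.
Local Open Scope complex_scope.

Definition fchar (n : nat) : R[i] := expi (- (2 * pi * n%:R / N%:R)).

Lemma fcharD m n : fchar (m + n) = fchar m * fchar n.
Proof. by rewrite /fchar -expiD natrD !mulrDr !mulrDl opprD. Qed.

Lemma norm_fchar n : `|fchar n| = 1.
Proof. exact: norm_expi. Qed.

Lemma fchar_mulN q : fchar (q * N) = 1.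
Proof.
rewrite /fchar natrM mulrA mulfK ?pnatr_eq0 -?lt0n //.
by rewrite -[RHS]expi0 -(addNr (2 * pi * q%:R)) expiD expi_2pi_nat mulr1.
Qed.

Lemma fchar_mod n : fchar (n %% N) = fchar n.
Proof. by rewrite [in RHS](divn_eq n N) fcharD fchar_mulN mul1r. Qed.

Lemma norm_1_sub_fchar n : `|1 - fchar n| = (2 * `|sin (pi * n%:R / N%:R)|)%:C.
Proof.
rewrite /fchar norm_1_sub_expi; congr (2 * _)%:C.
by rewrite -normrN -sinN; congr `|sin _|; field; rewrite pnatr_eq0 -lt0n.
Qed.

Lemma fchar_eq1 n : fchar n = 1 -> (N %| n)%N.
Proof.
move=> fchar1; have [r0|r_gt0] := posnP (n %% N); first by rewrite /dvdn r0.
have := min_div_le_sin R r_gt0 (ltn_pmod n N_gt0).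
have /eqP : `|1 - fchar (n %% N)| = 0 by rewrite fchar_mod fchar1 subrr normr0.
rewrite norm_1_sub_fchar eq_complex /= eqxx andbT mulf_eq0 pnatr_eq0 /= => /eqP ->.
rewrite leNgt divr_gt0 ?ltr0n //; lia.
Qed.

Lemma fchar_eqN1 n : fchar n = -1 -> (N %| n.*2)%N && ~~ (N %| n)%N.
Proof.
move=> fcharN1; apply/andP; split.
  by apply: fchar_eq1; rewrite -addnn fcharD fcharN1 mulrNN mulr1.
apply/negP => /dvdnP[q nE]; move: fcharN1; rewrite nE fchar_mulN => /eqP.
by rewrite -subr_eq0 opprK -mulr2n pnatr_eq0.
Qed.

Definition dft (f : nat -> R[i]) (a : nat) : R[i] :=
  \sum_(x < N) f x * fchar (a * x)%N.

Definition periodic_mod (f : nat -> R[i]) := forall y, f (y %% N)%N = f y.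

Lemma dft_shift f a s : periodic_mod f ->
  dft f a = fchar (a * s)%N * dft (fun x => f (x + s)%N) a.
Proof.
move=> f_per; rewrite /dft (big_ord_shift_mod s (fun x => f x * fchar (a * x)%N) N_gt0).
rewrite mulr_sumr; apply: eq_bigr => x _.
by rewrite f_per -fchar_mod modnMmr fchar_mod mulnDr fcharD; ring.
Qed.

Lemma dft_eq0_antiperiodic f a s : periodic_mod f -> (forall y, f (y + s)%N = - f y) ->
  fchar (a * s)%N != -1 -> dft f a = 0.
Proof.
move=> f_per f_anti; apply: contraNeq => dft_neq0.
have shifted : dft (fun x => f (x + s)%N) a = - dft f a.
  by rewrite /dft -sumrN; apply: eq_bigr => x _; rewrite f_anti mulNr.
have : (1 + fchar (a * s)%N) * dft f a = 0.
  by rewrite mulrDl mul1r {1}(dft_shift a s f_per) shifted mulrN addNr.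
by move/eqP; rewrite mulf_eq0 (negbTE dft_neq0) orbF addrC addr_eq0.
Qed.

Lemma norm_dft_variation f a : periodic_mod f ->
  `|dft f a| * `|1 - fchar a| <= \sum_(x < N) `|f x.+1 - f x|.
Proof.
move=> f_per.
have shift1 : dft f a = fchar a * dft (fun x => f x.+1) a.
  rewrite (dft_shift a 1 f_per) muln1; congr (_ * _).
  by apply: eq_bigr => x _; rewrite addn1.
have -> : `|dft f a| * `|1 - fchar a| = `|fchar a * (dft (fun x => f x.+1) a - dft f a)|.
  by rewrite -normrM; congr `|_|; rewrite shift1; ring.
rewrite normrM norm_fchar mul1r /dft -sumrB; apply: le_trans (ler_norm_sum _ _ _) _.
by apply: ler_sum => x _; rewrite -mulrBl normrM norm_fchar mulr1.
Qed.
End Character.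

Section Bits.
Variable R : realType.

Definition bitn (i y : nat) : R[i] := (-1) ^+ odd (y %/ 2 ^ i)%N.

Lemma bitn_addpow i y : bitn i (y + 2 ^ i)%N = - bitn i y.
Proof.
by rewrite /bitn -{1}[(2 ^ i)%N]mul1n addnC divnMDl ?expn_gt0 // oddD addTb signrN.
Qed.

Lemma bitn_periodic k i : (i < k)%N -> periodic_mod (2 ^ k) (bitn i).
Proof.
move=> ik y; rewrite [in RHS](divn_eq y (2 ^ k)) /bitn.
rewrite -(subnK (ltnW ik)) expnD mulnA divnMDl ?expn_gt0 //.
by rewrite oddD oddM oddX subn_eq0 leqNgt ik andbF.
Qed.

Lemma norm_bitnS_sub i x :
  `|bitn i x.+1 - bitn i x| <= 2 * (x.+1 %/ 2 ^ i - x %/ 2 ^ i)%N%:R.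
Proof.
rewrite /bitn divnS ?expn_gt0 //; case: (2 ^ i %| x.+1)%N => /=.
  by rewrite addnK mulr1 (le_trans (ler_normB _ _)) // !normr_sign.
by rewrite add0n subnn subrr normr0 mulr0.
Qed.

Lemma variation_bitn k i : (i <= k)%N ->
  \sum_(x < 2 ^ k) `|bitn i x.+1 - bitn i x| <= 2 * (2 ^ (k - i))%:R.
Proof.
move=> ik; apply: le_trans (ler_sum _ (fun (x : 'I_(2 ^ k)) _ => norm_bitnS_sub i x)) _.
rewrite -mulr_sumr -natr_sum.
rewrite -(big_mkord xpredT (fun x => x.+1 %/ 2 ^ i - x %/ 2 ^ i)%N) telescope_sumn;
  last by move=> u v uv; apply: leq_div2r.
by rewrite div0n subn0 -expnB.
Qed.
End Bits.

Lemma odd_multiple_pow2 k i a : (i < k)%N ->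
  (2 ^ k %| (a * 2 ^ i).*2)%N -> ~~ (2 ^ k %| a * 2 ^ i)%N -> odd_multiple a (2 ^ (k - i - 1)).
Proof.
move=> ik; have kE : (2 ^ k = 2 ^ (k - i - 1) * 2 ^ i.+1)%N.
  by rewrite -expnD; congr (2 ^ _)%N; lia.
rewrite -muln2 -mulnA -expnSr kE dvdn_pmul2r ?expn_gt0 // => /dvdnP[m ->] not_dvd.
exists m; split => //; apply: contraNT not_dvd => m_even.
apply/dvdnP; exists m./2; rewrite -{1}[m]odd_double_half (negbTE m_even) add0n -muln2 expnS.
ring.
Qed.

Lemma distN_nat (R : realType) (N a : nat) : (a <= N)%N ->
  distN N a%:R = (minn a (N - a))%:R :> R.
Proof.
move=> aN; set m := (minn a (N - a))%:R : R.
have m_le_a : m <= a%:R by rewrite ler_nat geq_minl.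
have m_le_Na : m <= N%:R - a%:R by rewrite -natrB // ler_nat geq_minr.
have m_lb : lbound [set `|a%:R - N%:R * z%:~R| | z in [set: int]]%classic m.
  move=> _ [z _ <-]; have [z_le0|z_gt0] := lerP z 0.
    have : N%:R * z%:~R <= 0 :> R by rewrite mulr_ge0_le0 // lerz0.
    have := ler_norm (a%:R - N%:R * z%:~R : R); lra.
  have : N%:R <= N%:R * z%:~R :> R by rewrite ler_peMr // ler1z; lia.
  have := ler_norm (- (a%:R - N%:R * z%:~R) : R); rewrite normrN; lra.
apply/eqP; rewrite eq_le; apply/andP; split; last first.
  by apply: lb_le_inf => //; exists `|a%:R - N%:R * 0%:~R|; exists 0.
apply: (ge_inf (ex_intro _ m m_lb)).
have [small|big] := leqP a (N - a).
  by exists 0 => //; rewrite mulr0 subr0 /m (minn_idPl small) ger0_norm.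
exists 1 => //; rewrite mulr1 /m (minn_idPr (ltnW big)).
by rewrite distrC ger0_norm ?natrB // subr_ge0 ler_nat.
Qed.

Lemma fourier_bit (R : realType) k i (a : 'I_(2 ^ k)) :
  fourier (@bit R k i) a = (2 ^ k)%:R^-1 * dft (2 ^ k) (bitn R i) a.
Proof.
by congr (_ * _); apply: eq_bigr => x _; rewrite /fchar natrM mulrA.
Qed.

Theorem lemma6p3 (R : realType) :
  exists c : R, forall (k i : nat), (i < k)%N -> forall a : 'I_(2 ^ k),
    (~ odd_multiple a (2 ^ (k - i - 1)) -> fourier (@bit R k i) a = 0) /\
    (odd_multiple a (2 ^ (k - i - 1)) ->
       `|fourier (@bit R k i) a| <=
         ((c * (2 ^ (k - i))%:R / distN (2 ^ k) (a : nat)%:R)%:C)%C).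
Proof.
exists 1 => k i ik a; rewrite fourier_bit.
have N_gt0 : (0 < 2 ^ k)%N by rewrite expn_gt0.
have bitn_per := bitn_periodic R ik.
split=> [not_odd_mult|[m [m_odd aE]]].
  rewrite (dft_eq0_antiperiodic N_gt0 bitn_per (bitn_addpow R i)) ?mulr0 //.
  apply/eqP => /(fchar_eqN1 N_gt0) /andP[dvd_double not_dvd].
  exact: not_odd_mult (odd_multiple_pow2 ik dvd_double not_dvd).
have a_gt0 : (0 < a)%N by rewrite aE muln_gt0 odd_gt0 ?expn_gt0.
have var := le_trans (norm_dft_variation N_gt0 a bitn_per) (variation_bitn R (ltnW ik)).
have sin_lb := min_div_le_sin R a_gt0 (ltn_ord a).
rewrite norm_1_sub_fchar // rmorphM /= rmorph_nat mulrCA ler_pM2l ?ltr0n // in var.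
rewrite -lecR fmorph_div /= !rmorph_nat in sin_lb.
rewrite distN_nat ?(ltnW (ltn_ord a)) // normrM normfV normr_nat mul1r fmorph_div /= !rmorph_nat.
rewrite ler_pdivlMr ?ltr0n; last by have := ltn_ord a; lia.
apply: le_trans var; rewrite [leLHS]mulrAC [leLHS]mulrC [_^-1 * _]mulrC.
exact: ler_wpM2l.
Qed.
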